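(* Let $Y$ be a real normed space and let $X\subseteq Y$ be a non-empty compact set which is uniquely remotal with respect to $\mathrm{conv}(X)$. Then $X$ is a singleton.
   Context: A non-empty set $C$ in a normed space $S$ is said to be uniquely remotal with respect to a set $D\subseteq S$ if, for each $y\in D$, there exists a unique $x\in C$ such that $\|x-y\|=\sup_{u\in C}\|u-y\|$. Here $\mathrm{conv}(X)$ denotes the convex hull of $X$. *)

From HB Require Import structures.
From mathcomp Require Import all_boot all_order all_algebra.
From mathcomp Require Import all_classical all_reals all_analysis.
Set Implicit Arguments. Unset Strict Implicit. Unset Printing Implicit Defensive.
Import Order.TTheory GRing.Theory Num.Theory.
Import numFieldNormedType.Exports.
Local Open Scope classical_set_scope.
Local Open Scope ring_scope.

Definition conv_hull (R : realType) (Y : normedModType R) (X : set Y) : set Y :=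
  [set y | exists (n : nat) (l : 'I_n -> R) (x : 'I_n -> Y),
      (forall i, 0 <= l i) /\ \sum_(i < n) l i = 1 /\
      (forall i, X (x i)) /\ y = \sum_(i < n) l i *: x i].

Definition uniquely_remotal (R : realType) (Y : normedModType R) (C D : set Y) : Prop :=
  C !=set0 /\
  forall y, D y ->
    exists! x, C x /\ `|x - y| = sup [set `|u - y| | u in C].

From HB Require Import structures.
From mathcomp Require Import all_boot all_order all_algebra.
From mathcomp Require Import all_classical all_reals all_analysis.
From mathcomp Require Import lra finmap.
Set Implicit Arguments. Unset Strict Implicit. Unset Printing Implicit Defensive.
Import Order.TTheory GRing.Theory Num.Theory.
Import numFieldNormedType.Exports.
Local Open Scope classical_set_scope.
Local Open Scope ring_scope.

(* Let r(y) be the distance from y to its farthest points in X, and suppose X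
   contains two points at distance d. For a finite d/4-net s of X, the map
   v |-> r(sum_i v_i s_i) attains its minimum on the standard simplex, at some
   y in conv(X). The farthest point x from y is unique, so by compactness the
   points of X away from the net point s_i next to x are uniformly closer to y
   than x is; moving y slightly towards s_i therefore lowers r, contradicting
   minimality. Working over the finite simplex is what replaces the missing
   compactness of conv(X). *)

Section FarthestDistance.
Variables (R : realType) (Y : normedModType R) (X : set Y).

Definition farthest_dist (y : Y) : R := sup [set `|u - y| | u in X].

Hypotheses (X0 : X !=set0) (cX : compact X).

Lemma has_ubound_dist y : has_ubound [set `|u - y| | u in X].
Proof.
have [M [Mreal HM]] := compact_bounded cX.
exists (`|M| + 1 + `|y|) => _ [u Xu <-].
rewrite (le_trans (ler_normB _ _)) // lerD2r HM //.
by rewrite (le_lt_trans (real_ler_norm Mreal)) // ltrDl.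
Qed.

Lemma farthest_dist_ge y u : X u -> `|u - y| <= farthest_dist y.
Proof. by move=> Xu; apply: ub_le_sup; [exact: has_ubound_dist | exists u]. Qed.

Lemma farthest_dist_le y B :
  (forall u, X u -> `|u - y| <= B) -> farthest_dist y <= B.
Proof.
have [a Xa] := X0; move=> HB; apply: ge_sup; first by exists `|a - y|, a.
by move=> _ [u Xu <-]; exact: HB.
Qed.

Lemma farthest_dist_lipschitz y z :
  farthest_dist y <= farthest_dist z + `|y - z|.
Proof.
apply: farthest_dist_le => u Xu; rewrite (le_trans (ler_distD z _ _)) //.
by rewrite lerD ?farthest_dist_ge // distrC.
Qed.

Lemma continuous_farthest_dist : continuous farthest_dist.
Proof.
move=> y; apply/cvgrPdist_lt => e e0; near=> z.
have yz : `|y - z| < e by near: z; exact: (@cvgr_dist_lt _ _ _ (nbhs y) _ id y cvg_id _ e0).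
have h1 := farthest_dist_lipschitz y z; have h2 := farthest_dist_lipschitz z y.
rewrite distrC in h2; rewrite ltr_norml; apply/andP; split; lra.
Unshelve. all: by end_near.
Qed.

Lemma farthest_dist_ge_half_dist a b y :
  X a -> X b -> `|b - a| / 2 <= farthest_dist y.
Proof.
move=> Xa Xb; have := farthest_dist_ge y Xa; have := farthest_dist_ge y Xb.
have : `|b - a| <= `|b - y| + `|a - y|.
  by rewrite (le_trans (ler_distD y _ _)) // [X in _ + X]distrC.
lra.
Qed.

Section UniqueFarthestPoint.
Variables (y x : Y).
Hypothesis (xuniq : forall u, X u -> `|u - y| = farthest_dist y -> u = x).

(* The points of X outside a neighbourhood of x form a compact set on which the
   distance to y attains a maximum, and that maximum is not reached by x. *)
Lemma unique_farthest_gap z e : `|x - z| < e ->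
  exists2 r, r < farthest_dist y &
    forall u, X u -> e <= `|u - z| -> `|u - y| <= r.
Proof.
move=> xze; set K := X `&` [set u | e <= `|u - z|].
have [K0|K0] := pselect (K !=set0); last first.
  exists (farthest_dist y - 1); first lra.
  by move=> u Xu eu; exfalso; apply: K0; exists u.
have cont_dist (w : Y) : continuous (fun u : Y => `|u - w|).
  by move=> u; apply: cvg_norm; apply: cvgB; [exact: cvg_id | exact: cvg_cst].
have cK : compact K.
  apply: compact_closedI => //.
  apply: (@preimage_closed _ _ (fun u : Y => `|u - z|) [set r | e <= r]).
    by move=> u _; exact: cont_dist.
  exact: closed_ge.
have [u0 /set_mem[Xu0 eu0] u0max] :=
  compact_EVT_max K0 cK (continuous_subspaceT (cont_dist y)).
exists `|u0 - y|; last by move=> u Xu eu; apply: u0max; exact: mem_set.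
rewrite lt_neqAle farthest_dist_ge // andbT.
by apply/eqP => /(xuniq Xu0) u0x; move: eu0; rewrite /= u0x; lra.
Qed.

Lemma farthest_dist_descent z : `|x - z| < farthest_dist y / 2 ->
  exists2 t, 0 < t <= 1 &
    farthest_dist ((1 - t) *: y + t *: z) < farthest_dist y.
Proof.
set rho := farthest_dist y => xz.
have rho0 : 0 < rho by have := normr_ge0 (x - z); lra.
have [r0 r0rho Hr0] := unique_farthest_gap xz.
set r := Num.max r0 0; have r0r : r0 <= r by rewrite le_max lexx.
have [r_ge0 rrho] : 0 <= r /\ r < rho.
  by rewrite le_max lexx orbT gt_max r0rho rho0.
set B := farthest_dist z.
have HB u : X u -> `|u - z| <= B by exact: farthest_dist_ge.
have B0 : 0 <= B by have [a Xa] := X0; exact: le_trans (HB a Xa).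
set t := (rho - r) / (2 * (B + rho)).
have den0 : 0 < 2 * (B + rho) by lra.
have tden : t * (2 * (B + rho)) = rho - r by rewrite mulfVK // gt_eqF.
have t0 : 0 < t by rewrite divr_gt0 //; lra.
have t1 : t <= 1 by rewrite ler_pdivrMr //; lra.
clearbody t; exists t; first by rewrite t0 t1.
(* near x the step towards z gains t rho / 2; elsewhere the gap rho - r pays for it *)
suff : farthest_dist ((1 - t) *: y + t *: z)
         <= Num.max ((1 - t) * r + t * B) (rho - t * rho / 2).
  by rewrite le_max => /orP[] ?; nra.
apply: farthest_dist_le => u Xu.
have -> : u - ((1 - t) *: y + t *: z) = (1 - t) *: (u - y) + t *: (u - z).
  by rewrite !scalerBr opprD addrACA -scalerDl subrK scale1r.
apply: le_trans (ler_normD _ _) _.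
rewrite !normrZ (ger0_norm (ltW t0)) ger0_norm ?subr_ge0 //.
rewrite le_max; have [far|near] := lerP (rho / 2) `|u - z|.
  apply/orP; left.
  apply: lerD; apply: ler_wpM2l; rewrite ?subr_ge0 ?HB //; last exact: ltW.
  exact: le_trans (Hr0 u Xu far) r0r.
have uy : `|u - y| <= rho by exact: farthest_dist_ge.
apply/orP; right; nra.
Qed.

End UniqueFarthestPoint.

End FarthestDistance.

Section StandardSimplex.
Variables (R : realType) (n : nat).

Definition std_simplex : set 'rV[R]_n :=
  [set v | (forall i, 0 <= v ord0 i) /\ \sum_i v ord0 i = 1].

Lemma compact_std_simplex : compact std_simplex.
Proof.
apply: (@subclosed_compact _ _ [set v : 'rV[R]_n | forall i, `[0, 1]%classic (v ord0 i)]).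
- have -> : std_simplex = \bigcap_(i in setT) [set v : 'rV[R]_n | 0 <= v ord0 i]
      `&` (fun v : 'rV[R]_n => \sum_i v ord0 i) @^-1` [set 1].
    by apply/seteqP; split => v /= [h1 h2]; split=> // i *; exact: h1.
  have coord_cont i : continuous (fun v : 'rV[R]_n => v ord0 i).
    by move=> v; exact: coord_continuous.
  apply: closedI.
    apply: closed_bigI => i _.
    apply: (@preimage_closed _ _ (fun v : 'rV[R]_n => v ord0 i) [set x | 0 <= x]).
      by move=> v _; exact: coord_cont.
    exact: closed_ge.
  apply: (@preimage_closed _ _ (fun v : 'rV[R]_n => \sum_i v ord0 i) [set 1]);
    last exact: closed_eq.
  move=> v _.
  apply: (@continuous_big _ _ +%R 0 xpredT) => [|i _]; first exact: add_continuous.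
  exact: coord_cont.
- exact: (@rV_compact R n (fun=> `[0, 1]%classic) (fun=> @segment_compact R 0 1)).
- move=> v [v0 v1] i /=; rewrite in_itv /= v0 -v1.
  by rewrite (bigD1 i) //= lerDl sumr_ge0.
Qed.

Lemma delta_mx_std_simplex i : std_simplex (delta_mx ord0 i).
Proof.
split => [j|]; first by rewrite mxE ler0n.
rewrite (bigD1 i) //= big1 ?addr0 => [|j /negbTE ji]; by rewrite mxE ?eqxx ?ji.
Qed.

Lemma std_simplex_convex v w t :
  std_simplex v -> std_simplex w -> 0 <= t <= 1 ->
  std_simplex ((1 - t) *: v + t *: w).
Proof.
move=> [v0 v1] [w0 w1] /andP[t0 t1]; split => [j|].
  by rewrite !mxE addr_ge0 // mulr_ge0 // subr_ge0.
under eq_bigr do rewrite !mxE.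
by rewrite big_split /= -!mulr_sumr v1 w1 !mulr1 subrK.
Qed.

Variables (Y : normedModType R) (s : 'I_n -> Y).

Definition row_comb (v : 'rV[R]_n) : Y := \sum_i v ord0 i *: s i.

Lemma continuous_row_comb : continuous row_comb.
Proof.
move=> v; apply: (@continuous_big _ _ +%R 0 xpredT) => [|i _].
  exact: add_continuous.
by move=> w; apply: continuousZr_tmp; exact: coord_continuous.
Qed.

Lemma row_comb_delta i : row_comb (delta_mx ord0 i) = s i.
Proof.
rewrite /row_comb (bigD1 i) //= big1 ?addr0 => [|j /negbTE ji].
  by rewrite mxE !eqxx scale1r.
by rewrite mxE ji scale0r.
Qed.

Lemma row_combD a b v w :
  row_comb (a *: v + b *: w) = a *: row_comb v + b *: row_comb w.
Proof.
rewrite /row_comb !scaler_sumr -big_split /=; apply: eq_bigr => i _.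
by rewrite !mxE scalerDl !scalerA.
Qed.

Lemma conv_hull_row_comb (X : set Y) v :
  (forall i, X (s i)) -> std_simplex v -> conv_hull X (row_comb v).
Proof. by move=> Xs [v0 v1]; exists n, (fun i => v ord0 i), s. Qed.

End StandardSimplex.

Lemma compact_finite_net (R : realType) (Y : normedModType R) (X : set Y) e :
  compact X -> 0 < e ->
  exists n (s : 'I_n -> Y),
    (forall i, X (s i)) /\ forall u, X u -> exists i, `|s i - u| < e.
Proof.
rewrite compact_cover => cX e0.
have [D sD cov] := cX _ X (fun x : Y => ball x e) (fun _ _ => ball_open _ _)
  (fun u Xu => ex_intro2 X (fun x => ball x e u) u Xu (ballxx u e0)).
pose L := enum_fset D.
exists (size L), (fun i => nth 0 L i); split.
  by move=> i; apply/set_mem/sD; rewrite /= mem_nth.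
move=> u Xu; have [z zD uz] := cov u Xu.
exists (Ordinal (etrans (index_mem z L) zD)).
by rewrite /= nth_index //; move: uz; rewrite -ball_normE.
Qed.

Lemma set1_of_subsingleton (T : Type) (X : set T) a :
  X a -> (forall u v, X u -> X v -> u = v) -> X = [set a].
Proof.
move=> Xa Xuniq; apply/seteqP; split => [u Xu|u ->] //=.
exact: Xuniq.
Qed.

Theorem theorem1p1 (R : realType) (Y : normedModType R) (X : set Y) :
  X !=set0 -> compact X -> uniquely_remotal X (conv_hull X) ->
  exists x : Y, X = [set x].
Proof.
move=> X0 cX [_ remotal]; have [a Xa] := X0.
exists a; apply: set1_of_subsingleton => // b c Xb Xc; apply: contrapT => bc.
have d0 : 0 < `|c - b| / 4 by rewrite divr_gt0 // normr_gt0 subr_eq0 eq_sym; exact/eqP.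
have [n [s [Xs net]]] := compact_finite_net cX d0.
have [i0 _] := net a Xa.
have cont : continuous (farthest_dist X \o row_comb s).
  move=> w; apply: continuous_comp; first exact: continuous_row_comb.
  exact: continuous_farthest_dist.
have [v /set_mem vS vmin] := compact_EVT_min
  (ex_intro _ _ (delta_mx_std_simplex R i0)) (@compact_std_simplex R n)
  (continuous_subspaceT cont).
set y := row_comb s v.
have [x [[Xx _] xuniq]] := remotal y (conv_hull_row_comb Xs vS).
have [i xi] := net x Xx.
have rho_ge := farthest_dist_ge_half_dist cX y Xb Xc.
have xsi : `|x - s i| < farthest_dist X y / 2 by rewrite distrC; lra.
have [t /andP[t0 t1] descent] := farthest_dist_descent X0 cX
  (fun u Xu ufar => esym (xuniq u (conj Xu ufar))) xsi.
have t01 : 0 <= t <= 1 by rewrite ltW.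
have := vmin _ (mem_set (std_simplex_convex vS (delta_mx_std_simplex R i) t01)).
rewrite /= row_combD row_comb_delta -/y.
by move=> /(lt_le_trans descent); rewrite ltxx.
Qed.
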